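(* The algebra $\mathcal{A}$ (under pointwise operations) of real-valued continuous functions on $[0,1]$ which are analytic on $(0,1)$ admits a set of free generators of cardinality $\mathfrak{c}$, i.e. there is $Z=\{z_\alpha:\alpha<\mathfrak{c}\}\subset\mathcal{A}$ such that for every polynomial $P$ with real coefficients and no constant term and distinct $z_{\alpha_1},\dots,z_{\alpha_n}\in Z$, $P(z_{\alpha_1},\dots,z_{\alpha_n})=0$ iff $P=0$.
   Context: $\mathfrak{c}$ is the cardinality of the continuum. *)

From HB Require Import structures.
From mathcomp Require Import all_boot all_order all_algebra.
From mathcomp Require Import mpoly.
From mathcomp Require Import all_classical all_reals all_analysis.
Set Implicit Arguments. Unset Strict Implicit. Unset Printing Implicit Defensive.
Import Order.TTheory GRing.Theory Num.Theory.
Import numFieldNormedType.Exports.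
Local Open Scope classical_set_scope.
Local Open Scope ring_scope.

Definition analytic_at (R : realType) (f : R -> R) (x0 : R) : Prop :=
  exists (r : R) (a : nat -> R), 0 < r /\
    forall x : R, `|x - x0| < r ->
      ([series a k * (x - x0) ^+ k]_k) @ \oo --> f x.

(* The algebra A: continuous on [0,1], analytic on (0,1).  Functions are
   represented as maps R -> R; only their values on [0,1] matter. *)
Definition in_A (R : realType) (f : R -> R) : Prop :=
  {within `[(0:R), 1], continuous f} /\
  (forall x : R, 0 < x < 1 -> analytic_at f x).

Definition A_eq (R : realType) (f g : R -> R) : Prop :=
  forall x : R, 0 <= x <= 1 -> f x = g x.

Definition mpoly_eval_fun (R : realType) (n : nat)
  (P : {mpoly R[n]}) (z : 'I_n -> R -> R) : R -> R :=
  fun x => meval (fun i => z i x) P.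

From HB Require Import structures.
From mathcomp Require Import all_boot all_order all_algebra.
From mathcomp Require Import mpoly.
From mathcomp Require Import all_classical all_reals all_analysis.
From mathcomp Require Import ring lra zify.
Set Implicit Arguments. Unset Strict Implicit. Unset Printing Implicit Defensive.
Import Order.TTheory GRing.Theory Num.Theory.
Local Open Scope ring_scope.

(* Take z_a x = exp (c_a x).  A polynomial in z_(alpha_1), ..., z_(alpha_n) is
   then an exponential sum whose frequencies are the numbers \sum_i m_i c_(alpha_i)
   attached to its monomials m.  If these frequencies are distinct, an exponential
   sum vanishing at the N points j / N, j < N, is zero: its coefficients solve a
   Vandermonde system.  So it suffices that the c_a be Z-linearly independent.
   We take c_t = \sum_(m in S_t) 2^(-m^2), where S_t codes the dyadic
   approximations floor (2^k t), k in N.  For distinct t_1, ..., t_n and large k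
   the code of floor (2^k t_i) lies in S_(t_i) only, so a nontrivial integer
   combination of the c_(t_i) is a series \sum_m e_m 2^(-m^2) with integer
   coefficients, bounded by some D, and e_m <> 0 for some m > D.  Such a series
   cannot vanish: otherwise 2^(q^2) times its partial sums up to q would be
   integers of absolute value < 1 for all large q, forcing e = 0 beyond D. *)

Section LacunaryWeight.
Variable R : realFieldType.

Definition lac_weight (m : nat) : R := (2 ^+ (m * m))^-1.

Lemma lac_weight_gt0 m : 0 < lac_weight m.
Proof. by rewrite invr_gt0 exprn_gt0. Qed.

Lemma lac_weightS q : lac_weight q.+1 = lac_weight q / 2 ^+ (2 * q + 1).
Proof. by rewrite -invfM -exprD; congr (_ ^+ _)^-1; lia. Qed.

Lemma lac_weight_double m : 2 * lac_weight m.+1 <= lac_weight m.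
Proof.
rewrite lac_weightS mulrCA ger_pMr ?lac_weight_gt0 //.
rewrite ler_pdivrMr ?exprn_gt0 // mul1r exprD expr1.
by rewrite ler_peMl ?ler0n // exprn_ege1 ?ler1n.
Qed.

Lemma sum_lac_weight_tail p N : (p <= N)%N ->
  \sum_(p <= m < N) lac_weight m + 2 * lac_weight N <= 2 * lac_weight p.
Proof.
elim: N => [|N IH]; first by rewrite leqn0 => /eqP ->; rewrite big_geq ?add0r.
rewrite leq_eqVlt => /predU1P[-> | le_pN]; first by rewrite big_geq ?add0r.
rewrite big_nat_recr //= -addrA; apply: le_trans (IH le_pN); rewrite lerD2l.
by have := lac_weight_double N; lra.
Qed.

Lemma intr_norm_lt1 (z : int) : `|z%:~R : R| < 1 -> z = 0.
Proof. by rewrite -intr_norm ltrz1; lia. Qed.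

Lemma lacunary_prefix_eq0 (e : nat -> int) (K : R) q :
  K < 2 ^+ (2 * q + 1) ->
  `|\sum_(0 <= m < q.+1) (e m)%:~R * lac_weight m| <= K * lac_weight q.+1 ->
  \sum_(0 <= m < q.+1) (e m)%:~R * lac_weight m = 0.
Proof.
move=> K_lt; set S := \sum_(_ <= _ < _) _ => S_le.
pose Z : int := \sum_(0 <= m < q.+1) e m * 2 ^+ (q * q - m * m).
have ZE : Z%:~R = 2 ^+ (q * q) * S.
  rewrite rmorph_sum big_distrr; apply: eq_big_nat => m /andP[_]; rewrite ltnS => mq /=.
  rewrite rmorphM rmorphXn /= /lac_weight -[in RHS](subnK (leq_mul mq mq)) exprD.
  by rewrite -[2%:~R]/(2 : R); field; rewrite expf_eq0 pnatr_eq0 andbF.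
have Z0 : Z = 0.
  apply: (@intr_norm_lt1 Z); rewrite ZE normrM ger0_norm ?exprn_ge0 //.
  apply: le_lt_trans (ler_wpM2l (exprn_ge0 _ (ler0n _ 2)) S_le) _.
  have -> : 2 ^+ (q * q) * (K * lac_weight q.+1) = K / 2 ^+ (2 * q + 1).
    by rewrite lac_weightS /lac_weight; field; rewrite !expf_eq0 !pnatr_eq0 !andbF.
  by rewrite ltr_pdivrMr ?exprn_gt0 // mul1r.
by move: ZE; rewrite Z0 => /esym/eqP; rewrite mulf_eq0 expf_eq0 pnatr_eq0 andbF => /eqP.
Qed.

Lemma lacunary_coef_eq0 (e : nat -> int) (K : R) :
  (forall p, `|\sum_(0 <= m < p) (e m)%:~R * lac_weight m| <= K * lac_weight p) ->
  forall q, K < 2 ^+ (2 * q + 1) -> e q.+1 = 0.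
Proof.
move=> bound q K_lt.
have K_lt' : K < 2 ^+ (2 * q.+1 + 1).
  by apply: lt_le_trans K_lt _; rewrite ler_eXn2l ?ltr1n //; lia.
have := lacunary_prefix_eq0 K_lt' (bound q.+2).
rewrite big_nat_recr //= (lacunary_prefix_eq0 K_lt (bound q.+1)) add0r.
by move/eqP; rewrite mulf_eq0 (gt_eqF (lac_weight_gt0 _)) orbF intr_eq0 => /eqP.
Qed.

End LacunaryWeight.

Definition pair_code (k j : nat) : nat := ((k + j) * (k + j) + k)%N.

Lemma pair_code_inj k j k' j' : pair_code k j = pair_code k' j' -> k = k' /\ j = j'.
Proof.
rewrite /pair_code => E.
have : (k + j = k' + j')%N by case: (ltngtP (k + j) (k' + j')) => // ?; nia.
lia.
Qed.

Lemma leq_pair_code k j : (k <= pair_code k j)%N.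
Proof. rewrite /pair_code; lia. Qed.

Section DyadicSeparation.
Variable R : archiFieldType.

Lemma floor_neq (a b : R) k : 1 <= 2 ^+ k * `|a - b| ->
  Num.floor (2 ^+ k * a) != Num.floor (2 ^+ k * b).
Proof.
move=> sep; apply/negP => /eqP E.
have := floor_itv (2 ^+ k * a); have := floor_itv (2 ^+ k * b).
rewrite E intrD => /andP[h1 h2] /andP[h3 h4].
have : `|2 ^+ k * a - 2 ^+ k * b| < 1 by rewrite ltr_norml; apply/andP; split; lra.
by rewrite -mulrBr normrM ger0_norm ?exprn_ge0 //; lra.
Qed.

Lemma exp2_eventually_gt (x : R) : exists K, forall k, (K <= k)%N -> x < 2 ^+ k.
Proof.
exists (Num.bound `|x|) => k le_Kk.
apply: le_lt_trans (ler_norm x) _; apply: lt_le_trans (archi_boundP (normr_ge0 x)) _.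
rewrite -natrX ler_nat; apply: leq_trans le_Kk _; exact/ltnW/ltn_expl.
Qed.

Lemma dyadic_separation n (alpha : 'I_n -> R) i0 D : injective alpha ->
  exists k, (D < k)%N /\ forall j, j != i0 -> 1 <= 2 ^+ k * `|alpha i0 - alpha j|.
Proof.
move=> alpha_inj.
have sep j : exists K, forall k, (K <= k)%N ->
    j != i0 -> 1 <= 2 ^+ k * `|alpha i0 - alpha j|.
  case: (eqVneq j i0) => [-> | ji0]; first by exists 0%N.
  have d_gt0 : 0 < `|alpha i0 - alpha j|.
    by rewrite normr_gt0 subr_eq0 (inj_eq alpha_inj) eq_sym.
  have [K gtK] := exp2_eventually_gt `|alpha i0 - alpha j|^-1.
  exists K => k /gtK lt_k _; apply: ltW.
  by rewrite -ltr_pdivrMr // mul1r.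
have [K HK] := fin_all_exists sep.
exists (\max_j K j + D).+1; split=> [|j]; first lia.
by move=> ji0; apply: HK ji0; have := @leq_bigmax _ K j; lia.
Qed.

End DyadicSeparation.

Section DigitSum.
Variable R : realType.
Local Open Scope classical_set_scope.

Definition dyadic_code (t : R) (k : nat) : nat :=
  pair_code k (pickle (Num.floor (2 ^+ k * t))).

Definition digit (t : R) (m : nat) : bool := `[< exists k, m = dyadic_code t k >].

Definition digit_psum (t : R) (N : nat) : R :=
  \sum_(0 <= m < N) (digit t m)%:R * lac_weight R m.

Definition digit_sum (t : R) : R := sup (range (digit_psum t)).

Lemma digit_psum_tail t p N : (p <= N)%N ->
  0 <= digit_psum t N - digit_psum t p <= 2 * lac_weight R p.
Proof.
move=> le_pN; rewrite /digit_psum (big_cat_nat (leq0n p) le_pN) /= addrAC subrr add0r.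
have w_ge0 m : 0 <= lac_weight R m by exact/ltW/lac_weight_gt0.
apply/andP; split; first by apply: sumr_ge0 => m _; rewrite mulr_ge0.
apply: le_trans (sum_lac_weight_tail R le_pN); rewrite -[leLHS]addr0.
apply: lerD; last by rewrite mulr_ge0.
by apply: ler_sum => m _; case: (digit t m); rewrite ?mul1r ?mul0r.
Qed.

Lemma digit_sum_bounds t p :
  digit_psum t p <= digit_sum t <= digit_psum t p + 2 * lac_weight R p.
Proof.
have psum0 : digit_psum t 0 = 0 by rewrite /digit_psum big_geq.
have ub : has_ubound (range (digit_psum t)).
  exists 2 => _ [N _ <-]; have /andP[_] := digit_psum_tail t (leq0n N).
  by rewrite psum0 subr0 /lac_weight mul0n expr0 invr1 mulr1.
apply/andP; split; first by apply: ub_le_sup => //; exists p.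
apply: ge_sup; first by exists (digit_psum t 0), 0%N.
move=> _ [N _ <-]; case: (leqP N p) => [le_Np | /ltnW le_pN].
  have /andP[h _] := digit_psum_tail t le_Np.
  by have := lac_weight_gt0 R p; lra.
by have /andP[_ h] := digit_psum_tail t le_pN; lra.
Qed.

Lemma digit_dyadic_code t k : digit t (dyadic_code t k).
Proof. by apply/asboolP; exists k. Qed.

Lemma digit_dyadic_code_other t s k : 1 <= 2 ^+ k * `|t - s| ->
  digit s (dyadic_code t k) = false.
Proof.
move=> sep; apply/asboolP => -[k' /pair_code_inj[<- /(pcan_inj pickleK) E]].
by move: (floor_neq sep); rewrite E eqxx.
Qed.

End DigitSum.

Section LinearIndependence.
Variable R : realType.
Variables (n : nat) (alpha : 'I_n -> R).
Hypothesis alpha_inj : injective alpha.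

Definition digit_comb (d : 'I_n -> int) (m : nat) : int :=
  \sum_i d i * (digit (alpha i) m)%:Z.

Lemma digit_comb_psum d p :
  \sum_(0 <= m < p) (digit_comb d m)%:~R * lac_weight R m =
  \sum_i (d i)%:~R * digit_psum (alpha i) p.
Proof.
under eq_bigr => m _ do rewrite rmorph_sum mulr_suml.
rewrite exchange_big /=; apply: eq_bigr => i _; rewrite big_distrr /=.
by apply: eq_bigr => m _; rewrite rmorphM /= mulrA.
Qed.

Lemma digit_comb_approx d p :
  `|\sum_i (d i)%:~R * digit_sum (alpha i) -
    \sum_(0 <= m < p) (digit_comb d m)%:~R * lac_weight R m|
  <= (2 * \sum_i `|d i|)%:R * lac_weight R p.
Proof.
rewrite digit_comb_psum -sumrB; apply: le_trans (ler_norm_sum _ _ _) _.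
rewrite natrM natr_sum mulr_sumr mulr_suml; apply: ler_sum => i _.
rewrite -mulrBr normrM natr_absz intr_norm [2 * _]mulrC -mulrA ler_wpM2l ?normr_ge0 //.
have /andP[lo hi] := digit_sum_bounds (alpha i) p.
by rewrite ger0_norm; lra.
Qed.

Lemma digit_sum_lin_indep d :
  \sum_i (d i)%:~R * digit_sum (alpha i) = 0 -> forall i, d i = 0.
Proof.
move=> comb0 i0; apply/eqP; apply: contraT => d_neq0.
have [k [D_lt_k sep]] := dyadic_separation i0 (\sum_i `|d i|)%N alpha_inj.
have comb_code : digit_comb d (dyadic_code (alpha i0) k) = d i0.
  rewrite /digit_comb (bigD1 i0) //= digit_dyadic_code mulr1 big1 ?addr0 // => j ji0.
  by rewrite digit_dyadic_code_other ?mulr0 // sep.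
have := leq_pair_code k (pickle (Num.floor (2 ^+ k * alpha i0))).
rewrite -/(dyadic_code _ _) in comb_code *.
case: (dyadic_code _ _) comb_code => [|q] comb_code le_kq; first lia.
suff : d i0 = 0 by move/eqP: d_neq0.
rewrite -comb_code; apply: (lacunary_coef_eq0 (R := R) (K := (2 * \sum_i `|d i|)%:R)).
  by move=> p; have := digit_comb_approx d p; rewrite comb0 sub0r normrN.
rewrite -natrX ltr_nat; have := ltn_expl (2 * q + 1) (isT : (1 < 2)%N); lia.
Qed.

End LinearIndependence.

Lemma digit_sum_inj (R : realType) : injective (@digit_sum R).
Proof.
move=> a b E; apply: contrapT => a_neq_b.
pose alpha (i : 'I_2) := if val i == 0%N then a else b.
have alpha_inj : injective alpha.
  by move=> [[|[|i]] ?] [[|[|j]] ?] //= alpha_eq; apply: val_inj => //=; exfalso; apply: a_neq_b.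
have := @digit_sum_lin_indep R 2 alpha alpha_inj (fun i => if val i == 0%N then 1 else -1).
by rewrite big_ord_recl big_ord1 /alpha /= E mulNr mul1r subrr => /(_ erefl ord0).
Qed.

Lemma vandermonde_sum_eq0 (F : fieldType) (T : eqType) (s : seq T) (f a : T -> F) :
  uniq s -> {in s &, injective f} ->
  (forall j, (j < size s)%N -> \sum_(t <- s) a t * f t ^+ j = 0) ->
  {in s, forall t, a t = 0}.
Proof.
elim: s a => [|t0 s IH] a //= /andP[t0_notin_s uniq_s] f_inj moments.
have f_inj_s : {in s &, injective f}.
  by move=> x y xs ys; apply: f_inj; rewrite inE ?xs ?ys orbT.
have a_s : {in s, forall t, a t = 0}.
  move=> t ts.
  have ft_neq : f t - f t0 != 0.
    rewrite subr_eq0; apply: contraNneq t0_notin_s => /f_inj <-;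
      by rewrite ?inE ?ts ?eqxx ?orbT.
  suff /eqP : a t * (f t - f t0) = 0 by rewrite mulf_eq0 (negbTE ft_neq) orbF => /eqP.
  have moments' j : (j < size s)%N ->
      \sum_(t <- s) a t * (f t - f t0) * f t ^+ j = 0.
    move=> lt_js.
    transitivity (\sum_(t <- t0 :: s) a t * (f t - f t0) * f t ^+ j).
      by rewrite big_cons subrr mulr0 mul0r add0r.
    rewrite (eq_bigr (fun t => a t * f t ^+ j.+1 - f t0 * (a t * f t ^+ j))).
      by rewrite sumrB -big_distrr /= (moments j.+1 lt_js) (moments j (ltnW lt_js)) mulr0 subr0.
    by move=> t' _; rewrite exprS; ring.
  exact: IH _ uniq_s f_inj_s moments' t ts.
move=> t; rewrite inE => /predU1P[-> | /a_s //].
have := moments 0%N isT; rewrite big_cons expr0 mulr1 big_seq big1 ?addr0 //.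
by move=> t' t's; rewrite a_s ?mul0r.
Qed.

Section ExponentialSums.
Variable R : realType.
Import numFieldNormedType.Exports.

Lemma expR_scale_in_A (c : R) : in_A (fun x => expR (c * x)).
Proof.
split.
  apply: continuous_subspaceT => x.
  by apply: continuous_comp; [exact: mulrl_continuous | exact: continuous_expR].
move=> x0 _; exists 1, (fun k => expR (c * x0) * (k`!%:R^-1 * c ^+ k)); split => // x _.
have -> : expR (c * x) = expR (c * x0) * expR (c * (x - x0)).
  by rewrite -expRD mulrBr addrC subrK.
have -> : series (fun k => expR (c * x0) * (k`!%:R^-1 * c ^+ k) * (x - x0) ^+ k)
    = (fun N => expR (c * x0) * series (exp_coeff (c * (x - x0))) N).
  apply: funext => N; rewrite /series /= big_distrr /=; apply: eq_bigr => k _.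
  by rewrite exp_coeffE /= exprMn !mulrA.
by apply: cvgMl_tmp; exact: is_cvg_series_exp_coeff.
Qed.

Lemma expR_sum_eq0 (T : eqType) (s : seq T) (lam a : T -> R) :
  uniq s -> {in s &, injective lam} ->
  (forall x, 0 <= x <= 1 -> \sum_(t <- s) a t * expR (lam t * x) = 0) ->
  {in s, forall t, a t = 0}.
Proof.
move=> uniq_s lam_inj vanish; pose N := size s.
(* sampled at x = j / N, the sum is the j-th moment for the nodes expR (lam t / N) *)
apply: (vandermonde_sum_eq0 (f := fun t => expR (lam t / N%:R))) => //
  [t t' ts t's /expR_inj E | j lt_jN].
  have N_gt0 : (0 < N)%N by rewrite -has_predT; apply/hasP; exists t.
  apply: lam_inj => //; move: E => /(congr1 ( *%R^~ N%:R)).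
  by rewrite /= !divfK // pnatr_eq0 -lt0n.
have N_gt0 : 0 < N%:R :> R by rewrite ltr0n; apply: leq_ltn_trans lt_jN.
rewrite -[RHS](vanish (j%:R / N%:R)); last first.
  by rewrite divr_ge0 //= ler_pdivrMr // mul1r ler_nat ltnW.
by apply: eq_bigr => t _; rewrite -expRM_natl mulrCA.
Qed.

Definition mnm_freq n (c : 'I_n -> R) (m : 'X_{1..n}) : R := \sum_i (m i)%:R * c i.

Lemma meval_expR n (c : 'I_n -> R) (P : {mpoly R[n]}) x :
  meval (fun i => expR (c i * x)) P =
  \sum_(m <- msupp P) P@_m * expR (mnm_freq c m * x).
Proof.
rewrite mevalE; apply: eq_bigr => m _; congr (_ * _).
rewrite /mnm_freq mulr_suml expR_sum; apply: eq_bigr => i _.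
by rewrite -expRM_natl mulrA.
Qed.

Lemma mnm_freq_digit_sum_inj n (alpha : 'I_n -> R) : injective alpha ->
  injective (mnm_freq (fun i => digit_sum (alpha i))).
Proof.
move=> alpha_inj m m' E; apply/mnmP => i.
have comb0 : \sum_j ((m j)%:Z - (m' j)%:Z)%:~R * digit_sum (alpha j) = 0.
  rewrite -[RHS](subrr (mnm_freq (fun i => digit_sum (alpha i)) m)) {2}E -sumrB.
  by apply: eq_bigr => j _; rewrite rmorphB /= mulrBl.
by have /eqP := digit_sum_lin_indep alpha_inj comb0 i; rewrite subr_eq0 => /eqP [].
Qed.

End ExponentialSums.

Theorem mainTheorem8 (R : realType) :
  exists z : R -> (R -> R),
    injective z /\
    (forall a : R, in_A (z a)) /\
    (forall (n : nat) (alpha : 'I_n -> R) (P : {mpoly R[n]}),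
        injective alpha ->
        P@_(0%MM) = 0 ->
        (A_eq (mpoly_eval_fun P (fun i => z (alpha i))) (fun _ => 0)
         <-> P = 0)).
Proof.
exists (fun a x => expR (digit_sum a * x)); split; [|split].
- move=> a b /(congr1 (fun f => f 1)); rewrite /= !mulr1 => /expR_inj.
  exact: digit_sum_inj.
- by move=> a; exact: expR_scale_in_A.
(* The constant term plays no special role: it is the exponential of frequency 0. *)
move=> n alpha P alpha_inj _; split=> [vanish | ->]; last first.
  by move=> x _; rewrite /mpoly_eval_fun meval0.
apply/mpolyP => m; rewrite mcoeff0.
have [m_supp | ] := boolP (m \in msupp P); last by rewrite mcoeff_msupp negbK => /eqP.
apply: (expR_sum_eq0 (a := fun m => P@_m) (msupp_uniq P)
  (in2W (mnm_freq_digit_sum_inj alpha_inj)) _ m_supp) => x x01.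
by rewrite -meval_expR; exact: vanish.
Qed.
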